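(* Let $J'=(z_w,z_w')$ be a nonempty open interval, let $r:J'\to\mathbb{R}$ be differentiable and non-increasing, and let $h:J'\to\mathbb{R}$ be differentiable with $\dot h(z)=1+h(z)^2-2r(z)h(z)$ on $J'$, having exactly one zero $z_*\in J'$. Let $G(z)=z-\dfrac{2h(z)}{2+h(z)^2-2r(z)h(z)}$ and $z_{n+1}=G(z_n)$. (1) If $0<r(z)<1$ for all $z\in(z_*,z_w')$, then for every $z_0\in(z_*,z_w')$ all iterates are well defined, and $(z_n)$ is monotonically decreasing, stays in $(z_*,z_w')$, and converges to $z_*$. (2) If $-1<r(z)<0$ for all $z\in(z_w,z_* )$, then for every $z_0\in(z_w,z_* )$ all iterates are well defined, and $(z_n)$ is monotonically increasing, stays in $(z_w,z_* )$, and converges to $z_*$.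
   Context: $\dot{}$ denotes differentiation with respect to $z$. Here $h<0$ on $(z_w,z_* )$ and $h>0$ on $(z_*,z_w')$. *)

From Stdlib Require Export Reals.
Open Scope R_scope.

Definition denomG (r h : R -> R) (z : R) : R := 2 + h z ^ 2 - 2 * r z * h z.
Definition Gmap (r h : R -> R) (z : R) : R := z - 2 * h z / denomG r h z.

Definition iterG (r h : R -> R) (z0 : R) (n : nat) : R := Nat.iter n (Gmap r h) z0.

From Stdlib Require Import Reals Lra Psatz.
From Coquelicot Require Import Coquelicot.
Open Scope R_scope.

(* Right of the zero, h' = 1 + h^2 - 2 r h = (h - r)^2 + 1 - r^2 > 0 whenever
   |r| < 1, so h > 0 there and G(z) = z - 2 h(z) / (1 + h'(z)) < z.  To see that
   G(z) stays above z_*, freeze r at the value r(z) and compare with the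
   one-variable map t |-> t - 2 h(t) / (2 + h(t)^2 - 2 r(z) h(t)): it fixes z_*
   and has positive slope on (z_*, z), because r is non-increasing, so h'(t) is
   at most its frozen counterpart.  Hence the iterates decrease and stay above
   z_*; on [z_* + eps, z_0] each step is bounded below by a positive constant,
   so they come arbitrarily close to z_*.  Part (2) is part (1) for the data
   reflected through t |-> -t. *)

Lemma riccati_rhs_pos (y rho : R) : -1 < rho < 1 -> 0 < 1 + y ^ 2 - 2 * rho * y.
Proof. intros Hrho. pose proof (pow2_ge_0 (y - rho)). nra. Qed.

Lemma lt_of_derive_pos (f f' : R -> R) (a b : R) :
  a < b ->
  (forall c, a <= c <= b -> derivable_pt_lim f c (f' c)) ->
  (forall c, a < c < b -> 0 < f' c) ->
  f a < f b.
Proof.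
  intros Hab Hd Hpos.
  destruct (MVT_cor2 f f' a b Hab Hd) as [c [Hmvt Hc]].
  pose proof (Hpos c Hc). nra.
Qed.

Definition frozen_newton (h : R -> R) (rho t : R) : R :=
  t - 2 * h t / (2 + h t ^ 2 - 2 * rho * h t).

Lemma derivable_pt_lim_frozen_newton (h : R -> R) (rho c hc : R) :
  -1 < rho < 1 -> derivable_pt_lim h c hc ->
  derivable_pt_lim (frozen_newton h rho) c
    (1 - (4 - 2 * h c ^ 2) / (2 + h c ^ 2 - 2 * rho * h c) ^ 2 * hc).
Proof.
  intros Hrho Hd. apply is_derive_Reals. apply is_derive_Reals in Hd.
  assert (Hden : 0 < 2 + h c ^ 2 - 2 * rho * h c)
    by (pose proof (riccati_rhs_pos (h c) rho Hrho); lra).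
  unfold frozen_newton. auto_derive.
  - repeat split; try (exists hc; exact Hd). lra.
  - replace (Derive (fun x => h x) c) with hc by (symmetry; now apply is_derive_unique).
    field. lra.
Qed.

Lemma frozen_newton_slope_pos (y rho p : R) :
  0 < y -> -1 < rho < 1 -> 0 < p <= 1 + y ^ 2 - 2 * rho * y ->
  0 < 1 - (4 - 2 * y ^ 2) / (2 + y ^ 2 - 2 * rho * y) ^ 2 * p.
Proof.
  intros Hy Hrho [Hp Hpq].
  set (q := 1 + y ^ 2 - 2 * rho * y) in Hpq.
  replace (2 + y ^ 2 - 2 * rho * y) with (q + 1) by (unfold q; ring).
  (* (q + 1)^2 - (4 - 2 y^2) q = (q - 1)^2 + 2 y^2 q *)
  assert (Hlt : (4 - 2 * y ^ 2) * p < (q + 1) ^ 2).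
  { destruct (Rle_or_lt (4 - 2 * y ^ 2) 0); [nra|].
    assert (0 < y ^ 2 * q) by (apply Rmult_lt_0_compat; nra).
    pose proof (pow2_ge_0 (q - 1)). nra. }
  replace ((4 - 2 * y ^ 2) / (q + 1) ^ 2 * p) with ((4 - 2 * y ^ 2) * p / (q + 1) ^ 2)
    by (field; lra).
  apply Rlt_0_minus, Rlt_div_l; [nra | lra].
Qed.

Lemma exists_lt_of_uniform_decrease (u : nat -> R) (a c : R) :
  0 < c -> (forall n, a <= u n -> u (S n) <= u n - c) -> exists n, u n < a.
Proof.
  intros Hc Hstep.
  assert (Hdrop : forall n, (exists k, u k < a) \/ u n <= u O - INR n * c).
  { induction n as [|n [Hex | IH]]; [right; simpl; lra | now left |].
    destruct (Rlt_or_le (u n) a) as [Hlt | Hle]; [left; now exists n|].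
    right. rewrite S_INR. pose proof (Hstep n Hle). lra. }
  destruct (INR_archimed c (u O - a) Hc) as [N HN].
  destruct (Hdrop N) as [Hex | HuN]; [exact Hex | exists N; lra].
Qed.

Lemma Un_cv_decreasing_inf (u : nat -> R) (l : R) :
  Un_decreasing u -> (forall n, l < u n) ->
  (forall eps, 0 < eps -> exists n, u n < l + eps) -> Un_cv u l.
Proof.
  intros Hdec Hlb Happrox eps Heps.
  destruct (Happrox eps Heps) as [N HN]. exists N. intros n Hn.
  pose proof (decreasing_prop u N n Hdec Hn). pose proof (Hlb n).
  unfold Rdist. rewrite Rabs_right; lra.
Qed.

Section RightOfZero.

Variables (zs b : R) (r h : R -> R).

Hypothesis r_nonincreasing :
  forall x y, zs < x < b -> zs < y < b -> x <= y -> r y <= r x.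
Hypothesis h_riccati :
  forall z, zs <= z < b -> derivable_pt_lim h z (1 + h z ^ 2 - 2 * r z * h z).
Hypothesis h_zs : h zs = 0.
Hypothesis r_bounded : forall z, zs < z < b -> -1 < r z < 1.

Lemma h_increasing (x y : R) : zs <= x -> x < y -> y < b -> h x < h y.
Proof.
  intros Hx Hxy Hy.
  apply (lt_of_derive_pos h (fun z => 1 + h z ^ 2 - 2 * r z * h z)); [exact Hxy | |].
  - intros c Hc. apply h_riccati. lra.
  - intros c Hc. apply riccati_rhs_pos, r_bounded. lra.
Qed.

Lemma h_le (x y : R) : zs <= x -> x <= y -> y < b -> h x <= h y.
Proof.
  intros Hx Hxy Hy. destruct (Rle_lt_or_eq_dec x y Hxy) as [Hlt | ->]; [|lra].
  left. now apply h_increasing.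
Qed.

Lemma h_pos (z : R) : zs < z < b -> 0 < h z.
Proof. intros Hz. rewrite <- h_zs. apply h_increasing; lra. Qed.

Lemma denomG_pos (z : R) : zs < z < b -> 0 < denomG r h z.
Proof.
  intros Hz. unfold denomG.
  pose proof (riccati_rhs_pos (h z) (r z) (r_bounded z Hz)). lra.
Qed.

Lemma Gmap_lt (z : R) : zs < z < b -> Gmap r h z < z.
Proof.
  intros Hz. unfold Gmap.
  assert (0 < 2 * h z / denomG r h z).
  { apply Rdiv_lt_0_compat; [pose proof (h_pos z Hz) | apply denomG_pos]; lra. }
  lra.
Qed.

Lemma Gmap_gt (z : R) : zs < z < b -> zs < Gmap r h z.
Proof.
  intros Hz.
  change (Gmap r h z) with (frozen_newton h (r z) z).
  replace zs with (frozen_newton h (r z) zs) at 1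
    by (unfold frozen_newton; rewrite h_zs; field; lra).
  apply (lt_of_derive_pos _ (fun c => 1 - (4 - 2 * h c ^ 2)
           / (2 + h c ^ 2 - 2 * r z * h c) ^ 2 * (1 + h c ^ 2 - 2 * r c * h c)));
    [lra | |].
  - intros c Hc. apply derivable_pt_lim_frozen_newton; [now apply r_bounded|].
    apply h_riccati. lra.
  - intros c Hc. apply frozen_newton_slope_pos; [apply h_pos; lra | now apply r_bounded |].
    assert (Hrc : r z <= r c) by (apply r_nonincreasing; lra).
    pose proof (h_pos c ltac:(lra)).
    split; [apply riccati_rhs_pos, r_bounded; lra | nra].
Qed.

Lemma Gmap_step_lower_bound (a z0 x : R) :
  zs < a -> a <= x <= z0 -> z0 < b ->
  2 * h a / (2 + h z0 ^ 2 + 2 * h z0) <= x - Gmap r h x.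
Proof.
  intros Ha Hx Hz0.
  pose proof (h_pos a ltac:(lra)) as Hha.
  pose proof (h_le a x ltac:(lra) ltac:(lra) ltac:(lra)) as Hax.
  pose proof (h_le x z0 ltac:(lra) ltac:(lra) Hz0) as Hxz0.
  pose proof (r_bounded x ltac:(lra)) as Hrx.
  pose proof (denomG_pos x ltac:(lra)) as Hden.
  assert (Hden_le : denomG r h x <= 2 + h z0 ^ 2 + 2 * h z0) by (unfold denomG; nra).
  unfold Gmap. replace (x - (x - 2 * h x / denomG r h x)) with (2 * h x / denomG r h x)
    by ring.
  unfold Rdiv. apply Rmult_le_compat; try lra.
  - left. apply Rinv_0_lt_compat. nra.
  - now apply Rinv_le_contravar.
Qed.

Variable z0 : R.
Hypothesis z0_in : zs < z0 < b.

Lemma iterG_in (n : nat) : zs < iterG r h z0 n <= z0.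
Proof.
  induction n as [|n IH]; [simpl; lra|].
  change (iterG r h z0 (S n)) with (Gmap r h (iterG r h z0 n)).
  pose proof (Gmap_gt (iterG r h z0 n) ltac:(lra)).
  pose proof (Gmap_lt (iterG r h z0 n) ltac:(lra)). lra.
Qed.

Lemma iterG_decreasing : Un_decreasing (iterG r h z0).
Proof.
  intros n. left. apply Gmap_lt. pose proof (iterG_in n). lra.
Qed.

Lemma iterG_cv : Un_cv (iterG r h z0) zs.
Proof.
  apply Un_cv_decreasing_inf; [exact iterG_decreasing | apply iterG_in |].
  intros eps Heps.
  destruct (Rlt_or_le z0 (zs + eps)) as [Hlt | Hle]; [now exists O|].
  apply (exists_lt_of_uniform_decrease _ _ (2 * h (zs + eps) / (2 + h z0 ^ 2 + 2 * h z0))).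
  - pose proof (h_pos (zs + eps) ltac:(lra)). pose proof (h_pos z0 z0_in).
    apply Rdiv_lt_0_compat; nra.
  - intros n Hn. pose proof (iterG_in n).
    pose proof (Gmap_step_lower_bound (zs + eps) z0 (iterG r h z0 n)
                  ltac:(lra) ltac:(lra) ltac:(lra)).
    change (iterG r h z0 (S n)) with (Gmap r h (iterG r h z0 n)). lra.
Qed.

Theorem iterG_decreasing_cv_right :
  (forall n, zs < iterG r h z0 n < b
             /\ denomG r h (iterG r h z0 n) <> 0
             /\ iterG r h z0 (S n) < iterG r h z0 n)
  /\ Un_cv (iterG r h z0) zs.
Proof.
  split; [|exact iterG_cv]. intros n.
  pose proof (iterG_in n).
  split; [lra|]. split.
  - apply Rgt_not_eq, denomG_pos. lra.
  - apply Gmap_lt. lra.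
Qed.

End RightOfZero.

Lemma derivable_pt_lim_reflect (f : R -> R) (z l : R) :
  derivable_pt_lim f (- z) l -> derivable_pt_lim (fun t => - f (- t)) z l.
Proof.
  intros Hf. apply is_derive_Reals. apply is_derive_Reals in Hf.
  replace l with (- (-1 * l)) by ring.
  apply (is_derive_opp (fun t => f (- t))).
  apply (is_derive_comp f Ropp); [exact Hf|].
  auto_derive; [exact I | ring].
Qed.

Lemma denomG_reflect (r h : R -> R) (x : R) :
  denomG (fun t => - r (- t)) (fun t => - h (- t)) (- x) = denomG r h x.
Proof. unfold denomG. rewrite !Ropp_involutive. ring. Qed.

Lemma iterG_reflect (r h : R -> R) (z0 : R) (n : nat) :
  iterG (fun t => - r (- t)) (fun t => - h (- t)) (- z0) n = - iterG r h z0 n.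
Proof.
  induction n as [|n IH]; [reflexivity|].
  change (iterG ?r ?h ?z (S n)) with (Gmap r h (iterG r h z n)).
  rewrite IH. unfold Gmap. rewrite denomG_reflect, Ropp_involutive.
  unfold Rdiv. ring.
Qed.

Lemma Un_cv_opp_inv (u : nat -> R) (l : R) :
  Un_cv (fun n => - u n) (- l) -> Un_cv u l.
Proof.
  intros Hcv eps Heps. destruct (Hcv eps Heps) as [N HN]. exists N. intros n Hn.
  specialize (HN n Hn). unfold Rdist in *.
  replace (u n - l) with (- (- u n - - l)) by ring. now rewrite Rabs_Ropp.
Qed.

Theorem iterG_increasing_cv_left (zw zs : R) (r h : R -> R) :
  zw < zs ->
  (forall x y, zw < x < zs -> zw < y < zs -> x <= y -> r y <= r x) ->
  (forall z, zw < z <= zs -> derivable_pt_lim h z (1 + h z ^ 2 - 2 * r z * h z)) ->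
  h zs = 0 ->
  (forall z, zw < z < zs -> -1 < r z < 1) ->
  forall z0, zw < z0 < zs ->
    (forall n, zw < iterG r h z0 n < zs
               /\ denomG r h (iterG r h z0 n) <> 0
               /\ iterG r h z0 n < iterG r h z0 (S n))
    /\ Un_cv (iterG r h z0) zs.
Proof.
  intros Hzw Hmono Hd Hzero Hr z0 Hz0.
  destruct (iterG_decreasing_cv_right (- zs) (- zw) (fun t => - r (- t))
              (fun t => - h (- t))) with (z0 := - z0) as [Hiter Hcv].
  - intros x y Hx Hy Hxy. apply Ropp_le_contravar, Hmono; lra.
  - intros z Hz. apply derivable_pt_lim_reflect.
    replace (1 + (- h (- z)) ^ 2 - 2 * - r (- z) * - h (- z))
      with (1 + h (- z) ^ 2 - 2 * r (- z) * h (- z)) by ring.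
    apply Hd. lra.
  - rewrite Ropp_involutive, Hzero. lra.
  - intros z Hz. pose proof (Hr (- z) ltac:(lra)). lra.
  - lra.
  - split.
    + intros n. destruct (Hiter n) as [Hin [Hden Hlt]].
      rewrite iterG_reflect in Hin. rewrite !iterG_reflect in Hlt.
      rewrite iterG_reflect, denomG_reflect in Hden.
      split; [lra | split; [exact Hden | lra]].
    + apply Un_cv_opp_inv. intros eps Heps. destruct (Hcv eps Heps) as [N HN].
      exists N. intros n Hn. rewrite <- iterG_reflect. now apply HN.
Qed.

Theorem theorem3p4 (zw zw' zs : R) (r h : R -> R) :
  zw < zw' ->
  (forall z, zw < z < zw' -> exists l, derivable_pt_lim r z l) ->
  (forall x y, zw < x < zw' -> zw < y < zw' -> x <= y -> r y <= r x) ->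
  (forall z, zw < z < zw' ->
     derivable_pt_lim h z (1 + h z ^ 2 - 2 * r z * h z)) ->
  zw < zs < zw' -> h zs = 0 ->
  (forall z, zw < z < zw' -> h z = 0 -> z = zs) ->
  ( (forall z, zs < z < zw' -> 0 < r z < 1) ->
    forall z0, zs < z0 < zw' ->
      (forall n, zs < iterG r h z0 n < zw'
                 /\ denomG r h (iterG r h z0 n) <> 0
                 /\ iterG r h z0 (S n) < iterG r h z0 n)
      /\ Un_cv (iterG r h z0) zs )
  /\
  ( (forall z, zw < z < zs -> -1 < r z < 0) ->
    forall z0, zw < z0 < zs ->
      (forall n, zw < iterG r h z0 n < zs
                 /\ denomG r h (iterG r h z0 n) <> 0
                 /\ iterG r h z0 n < iterG r h z0 (S n))
      /\ Un_cv (iterG r h z0) zs ).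
Proof.
  intros _ _ Hmono Hd Hzs Hzero _. split.
  - intros Hr z0 Hz0. apply iterG_decreasing_cv_right; trivial.
    + intros x y Hx Hy. apply Hmono; lra.
    + intros z Hz. apply Hd. lra.
    + intros z Hz. pose proof (Hr z Hz). lra.
  - intros Hr z0 Hz0. apply iterG_increasing_cv_left; trivial; try lra.
    + intros x y Hx Hy. apply Hmono; lra.
    + intros z Hz. apply Hd. lra.
    + intros z Hz. pose proof (Hr z Hz). lra.
Qed.
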